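(* For every $n$-qubit raw quantum circuit $C$, $$\mathfrak G_n\circ[\![E(C)]\!]=[\![C]\!]\circ\mathfrak G_n .$$
   Context: Raw quantum circuits. These are terms generated from the following gates, with their numbers of wires: $H$ ($1$), $P(\varphi)$ ($1$, for each $\varphi\in\mathbb R$), $\mathrm{CNOT}$ ($2$), the scalar $s(\varphi)$ ($0$), the identity $\mathrm{id}$ ($1$), the swap $\mathrm{SW}$ ($2$) and the empty circuit ($0$). They are combined by $\circ$ (same number of wires) and $\otimes$ (stacking, the first factor on top). Their semantics $[\![C]\!]$ is a linear map on $\mathbb C^{\{0,1\}^n}$, with $[\![C_2\circ C_1]\!]=[\![C_2]\!][\![C_1]\!]$ and $[\![C_1\otimes C_2]\!]=[\![C_1]\!]\otimes[\![C_2]\!]$. On gates: - $H|x\rangle=\frac1{\sqrt2}(|0\rangle+(-1)^x|1\rangle)$; - $P(\varphi)|x\rangle=e^{ix\varphi}|x\rangle$; - $\mathrm{CNOT}|x,y\rangle=|x,x\oplus y\rangle$; - $\mathrm{SW}|x,y\rangle=|y,x\rangle$; - $s(\varphi)$ is multiplication by $e^{i\varphi}$; - $\mathrm{id}$ and the empty circuit are identities. Raw LOPP-circuits. These are terms generated from $\mathrm{ph}(\varphi)$ ($1$ mode), $\mathrm{bs}(\theta)$ ($2$ modes), $\mathrm{id}$ ($1$ mode), $\mathrm{sw}$ ($2$ modes) and the empty circuit, combined by $\circ$ and $\otimes$. Their semantics is a matrix on $\mathbb C^{m}$ ($m$ modes, basis $|0\rangle,\dots,|m-1\rangle$ from top to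 bottom), with $\otimes$ interpreted as direct sum and: - $[\![\mathrm{ph}(\varphi)]\!]=(e^{i\varphi})$; - $[\![\mathrm{bs}(\theta)]\!]=\begin{pmatrix}\cos\theta&i\sin\theta\\i\sin\theta&\cos\theta\end{pmatrix}$; - $[\![\mathrm{sw}]\!]=\begin{pmatrix}0&1\\1&0\end{pmatrix}$; - $[\![\mathrm{id}]\!]=(1)$. For a circuit $C$, $C^{\otimes 0}$ is empty and $C^{\otimes(m+1)}=C\otimes C^{\otimes m}$. Gray code. $G_0(0)=\epsilon$, and $G_n(k)=0G_{n-1}(k)$ if $k<2^{n-1}$, while $G_n(k)=1G_{n-1}(2^n-1-k)$ if $k\ge 2^{n-1}$. The map $\mathfrak G_n:\mathbb C^{2^n}\to\mathbb C^{\{0,1\}^n}$ is $|k\rangle\mapsto|G_n(k)\rangle$. Encoding. For each $k,n,\ell$, let $\sigma_{k,n,\ell}$ be a $2^{k+n+\ell}$-mode raw LOPP-circuit built only from $\mathrm{id}$ and $\mathrm{sw}$ such that $\mathfrak G\circ[\![\sigma_{k,n,\ell}]\!]\circ\mathfrak G^{-1}|x,y,z\rangle=|x,z,y\rangle$ for all $x\in\{0,1\}^k$, $y\in\{0,1\}^n$, $z\in\{0,1\}^\ell$ (here $\mathfrak G=\mathfrak G_{k+n+\ell}$). For an $n$-qubit raw circuit $C$, set $E(C)=E_{0,0}(C)$, where $E_{k,\ell}(C)$ is a $2^{k+n+\ell}$-mode circuit defined inductively by the following rules. - Compositions: - $E_{k,\ell}(C_1\otimes C_2)=E_{k+n_1,\ell}(C_2)\circ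 E_{k,\ell+n_2}(C_1)$, where $C_i$ has $n_i$ wires; - $E_{k,\ell}(C_2\circ C_1)=E_{k,\ell}(C_2)\circ E_{k,\ell}(C_1)$. - Structural gates and scalars: - $E_{k,\ell}(\mathrm{SW})=\sigma_{k,\ell,2}\circ\sigma_{k+\ell,1,1}\circ\sigma_{k,2,\ell}$; - $E_{k,\ell}(\text{empty})=\mathrm{id}^{\otimes2^{k+\ell}}$; - $E_{k,\ell}(\mathrm{id})=\mathrm{id}^{\otimes 2^{k+\ell+1}}$; - $E_{k,\ell}(s(\varphi))=\mathrm{ph}(\varphi)^{\otimes2^{k+\ell}}$. - When $k=\ell=0$: - $E_{0,0}(H)=(\mathrm{id}\otimes\mathrm{ph}(-\frac\pi2))\circ\mathrm{bs}(\frac\pi4)\circ(\mathrm{id}\otimes\mathrm{ph}(-\frac\pi2))$; - $E_{0,0}(P(\varphi))=\mathrm{id}\otimes\mathrm{ph}(\varphi)$; - $E_{0,0}(\mathrm{CNOT})=\mathrm{id}\otimes\mathrm{id}\otimes\mathrm{sw}$. - When $(k,\ell)\neq(0,0)$: - $E_{k,\ell}(H)=\sigma_{k,\ell,1}\circ B_H^{\otimes2^{k+\ell-1}}\circ\sigma_{k,1,\ell}$; - $E_{k,\ell}(P(\varphi))=\sigma_{k,\ell,1}\circ B_P^{\otimes 2^{k+\ell-1}}\circ\sigma_{k,1,\ell}$; - $E_{k,\ell}(\mathrm{CNOT})=\sigma_{k,\ell,2}\circ B_C^{\otimes 2^{k+\ell-1}}\circ\sigma_{k,2,\ell}$. Here: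 - $B_H=E_{0,0}(H)\otimes\big((\mathrm{ph}(-\frac\pi2)\otimes\mathrm{id})\circ\mathrm{bs}(\frac\pi4)\circ(\mathrm{ph}(-\frac\pi2)\otimes\mathrm{id})\big)$; - $B_P=\mathrm{id}\otimes\mathrm{ph}(\varphi)\otimes\mathrm{ph}(\varphi)\otimes\mathrm{id}$; - $B_C=\mathrm{id}\otimes\mathrm{id}\otimes\mathrm{sw}\otimes\mathrm{sw}\otimes\mathrm{id}\otimes\mathrm{id}$. *)

From mathcomp Require Import all_boot all_algebra.
From mathcomp Require Import complex.
From mathcomp Require Import reals trigo.
Set Implicit Arguments. Unset Strict Implicit. Unset Printing Implicit Defensive.
Import GRing.Theory Num.Theory.
Local Open Scope ring_scope.
Local Open Scope complex_scope.

Section Defs.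
Variable R : realType.
Local Notation C := R[i].

Definition cexpi (phi : R) : C := cos phi +i* sin phi.
Definition imagu : C := 0 +i* 1.

Inductive qcirc : Type :=
| QH : qcirc
| QP : R -> qcirc
| QCNOT : qcirc
| QScal : R -> qcirc
| QId : qcirc
| QSW : qcirc
| QEmpty : qcirc
| QComp : qcirc -> qcirc -> qcirc   (* QComp c2 c1 = c2 \circ c1 *)
| QTens : qcirc -> qcirc -> qcirc.  (* QTens c1 c2 = c1 \otimes c2, c1 on top *)

Fixpoint qwires (c : qcirc) : nat :=
  match c with
  | QH | QP _ | QId => 1
  | QCNOT | QSW => 2
  | QScal _ | QEmpty => 0
  | QComp _ c1 => qwires c1
  | QTens c1 c2 => (qwires c1 + qwires c2)%N
  end.

Fixpoint qwf (c : qcirc) : bool :=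
  match c with
  | QComp c2 c1 => [&& qwf c2, qwf c1 & qwires c2 == qwires c1]
  | QTens c1 c2 => qwf c1 && qwf c2
  | _ => true
  end.

(* Semantics: qsem c out inp is the matrix entry <out| [[c]] |inp>, for
   bit strings out, inp in {0,1}^n (n = qwires c); the first bit is the
   top wire. *)
Fixpoint qsem (c : qcirc) (out inp : seq bool) {struct c} : C :=
  match c with
  | QH => (Num.sqrt 2)^-1%:C *
          (if head false inp && head false out then -1 else 1)
  | QP phi => (out == inp)%:R * (if head false inp then cexpi phi else 1)
  | QCNOT => (out == [:: nth false inp 0;
                         nth false inp 0 (+) nth false inp 1])%:R
  | QScal phi => cexpi phi
  | QId | QEmpty => (out == inp)%:R
  | QSW => (out == [:: nth false inp 1; nth false inp 0])%:R
  | QComp c2 c1 =>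
      \sum_(t : (qwires c1).-tuple bool) qsem c2 out t * qsem c1 t inp
  | QTens c1 c2 =>
      qsem c1 (take (qwires c1) out) (take (qwires c1) inp) *
      qsem c2 (drop (qwires c1) out) (drop (qwires c1) inp)
  end.

Inductive lcirc : Type :=
| Lph : R -> lcirc
| Lbs : R -> lcirc
| Lid : lcirc
| Lsw : lcirc
| Lempty : lcirc
| Lcomp : lcirc -> lcirc -> lcirc   (* Lcomp c2 c1 = c2 \circ c1 *)
| Ltens : lcirc -> lcirc -> lcirc.  (* Ltens c1 c2 = c1 \otimes c2, c1 on top *)

Fixpoint lmodes (c : lcirc) : nat :=
  match c with
  | Lph _ | Lid => 1
  | Lbs _ | Lsw => 2
  | Lempty => 0
  | Lcomp _ c1 => lmodes c1
  | Ltens c1 c2 => (lmodes c1 + lmodes c2)%N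
  end.

Fixpoint lwf (c : lcirc) : bool :=
  match c with
  | Lcomp c2 c1 => [&& lwf c2, lwf c1 & lmodes c2 == lmodes c1]
  | Ltens c1 c2 => lwf c1 && lwf c2
  | _ => true
  end.

Fixpoint lperm_only (c : lcirc) : bool :=
  match c with
  | Lid | Lsw => true
  | Lcomp c2 c1 | Ltens c2 c1 => lperm_only c2 && lperm_only c1
  | _ => false
  end.

(* Semantics: lsem c i j is the (i,j) entry of the m x m matrix [[c]]
   (modes 0..m-1 from top to bottom); \otimes is the direct sum. *)
Fixpoint lsem (c : lcirc) (i j : nat) {struct c} : C :=
  match c with
  | Lph phi => ((i == 0) && (j == 0))%:R * cexpi phi
  | Lbs th => if ((i < 2) && (j < 2))%N then
                (if i == j then (cos th)%:C else imagu * (sin th)%:C)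
              else 0
  | Lsw => [&& (i < 2)%N, (j < 2)%N & i != j]%:R
  | Lid | Lempty => (i == j)%:R
  | Lcomp c2 c1 => \sum_(k < lmodes c1) lsem c2 i k * lsem c1 k j
  | Ltens c1 c2 =>
      if ((i < lmodes c1) && (j < lmodes c1))%N then lsem c1 i j
      else if ((lmodes c1 <= i) && (lmodes c1 <= j))%N then
        lsem c2 (i - lmodes c1)%N (j - lmodes c1)%N
      else 0
  end.

Fixpoint ltpow (c : lcirc) (m : nat) : lcirc :=
  match m with
  | 0 => Lempty
  | m'.+1 => Ltens c (ltpow c m')
  end.

End Defs.

Arguments Lid {R}. Arguments Lsw {R}. Arguments Lempty {R}.
Arguments QH {R}. Arguments QCNOT {R}. Arguments QId {R}. Arguments QSW {R}. Arguments QEmpty {R}.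

Fixpoint gray (n k : nat) : seq bool :=
  match n with
  | 0 => [::]
  | n'.+1 => if (k < 2 ^ n')%N then false :: gray n' k
             else true :: gray n' (2 ^ n - 1 - k)
  end.

Section Enc.
Variable R : realType.
Local Notation C := R[i].

(* matrix of \mathfrak G_n : C^{2^n} -> C^{{0,1}^n}, entry (x, k) *)
Definition graym (n : nat) (x : seq bool) (k : nat) : C := (x == gray n k)%:R.
(* matrix of \mathfrak G_n^{-1} : C^{{0,1}^n} -> C^{2^n}, entry (k, x)
   (the inverse of the bijection |k> |-> |G_n(k)>) *)
Definition graym_inv (n : nat) (k : nat) (x : seq bool) : C := (gray n k == x)%:R.

Definition sigma_spec (sigma : nat -> nat -> nat -> lcirc R) : Prop :=
  forall k n l : nat,
    [/\ lperm_only (sigma k n l), lwf (sigma k n l),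
        lmodes (sigma k n l) = (2 ^ (k + n + l))%N &
        forall (x : k.-tuple bool) (y : n.-tuple bool) (z : l.-tuple bool)
               (u : (k + n + l).-tuple bool),
          \sum_(a < (2 ^ (k + n + l))%N) \sum_(b < (2 ^ (k + n + l))%N)
             graym (k + n + l) u a * lsem (sigma k n l) a b *
             graym_inv (k + n + l) b (x ++ y ++ z)
          = (val u == x ++ z ++ y)%:R :> C].

Definition mpi2 : R := - (pi / 2).
Definition pi4 : R := pi / 4.

Definition EH00 : lcirc R :=
  Lcomp (Ltens Lid (Lph mpi2)) (Lcomp (Lbs pi4) (Ltens Lid (Lph mpi2))).
Definition BH : lcirc R :=
  Ltens EH00 (Lcomp (Ltens (Lph mpi2) Lid) (Lcomp (Lbs pi4) (Ltens (Lph mpi2) Lid))).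
Definition BP (phi : R) : lcirc R :=
  Ltens Lid (Ltens (Lph phi) (Ltens (Lph phi) Lid)).
Definition BC : lcirc R :=
  Ltens Lid (Ltens Lid (Ltens Lsw (Ltens Lsw (Ltens Lid Lid)))).

Variable sigma : nat -> nat -> nat -> lcirc R.

Fixpoint enc (k l : nat) (c : qcirc R) {struct c} : lcirc R :=
  match c with
  | QTens c1 c2 =>
      Lcomp (enc (k + qwires c1) l c2) (enc k (l + qwires c2) c1)
  | QComp c2 c1 => Lcomp (enc k l c2) (enc k l c1)
  | QSW => Lcomp (sigma k l 2) (Lcomp (sigma (k + l) 1 1) (sigma k 2 l))
  | QEmpty => ltpow Lid (2 ^ (k + l))
  | QId => ltpow Lid (2 ^ (k + l + 1))
  | QScal phi => ltpow (Lph phi) (2 ^ (k + l))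
  | QH => if (k == 0) && (l == 0) then EH00
          else Lcomp (sigma k l 1) (Lcomp (ltpow BH (2 ^ (k + l - 1))) (sigma k 1 l))
  | QP phi => if (k == 0) && (l == 0) then Ltens Lid (Lph phi)
          else Lcomp (sigma k l 1) (Lcomp (ltpow (BP phi) (2 ^ (k + l - 1))) (sigma k 1 l))
  | QCNOT => if (k == 0) && (l == 0) then Ltens Lid (Ltens Lid Lsw)
          else Lcomp (sigma k l 2) (Lcomp (ltpow BC (2 ^ (k + l - 1))) (sigma k 2 l))
  end%N.

Definition E (c : qcirc R) : lcirc R := enc 0 0 c.

End Enc.

From mathcomp Require Import all_boot all_algebra.
From mathcomp Require Import complex.
From mathcomp Require Import reals trigo.
From mathcomp Require Import zify ring.
Import GRing.Theory Num.Theory.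
Local Open Scope ring_scope.
Local Open Scope complex_scope.
Set Implicit Arguments. Unset Strict Implicit. Unset Printing Implicit Defensive.

(* Write [ungray s] for the inverse of the Gray code, i.e. the mode carrying
   the basis state |s>.  The statement G_n o [[E(C)]] = [[C]] o G_n amounts
   to [[E(C)]]_{ungray y, ungray y'} = <y|[[C]]|y'> for all bit strings y, y'.
   Since E is defined through the contextual encodings E_{k,l}, we prove the
   stronger invariant [enc_spec]: E_{k,l}(C) acts on the mode ungray(x y z)
   (|x| = k, |z| = l) as the identity on the context x, z and as [[C]] on y. *)

Fixpoint ungray (s : seq bool) : nat :=
  match s with
  | [::] => 0
  | b :: s' => if b then (2 * 2 ^ size s' - 1 - ungray s')%N else ungray s'
  end.

Lemma ungray_lt s : (ungray s < 2 ^ size s)%N.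
Proof.
elim: s => [|b s IH] //=; rewrite expnS.
have := expn_gt0 2 (size s); case: b; lia.
Qed.

Lemma size_gray n k : size (gray n k) = n.
Proof. by elim: n k => [|n IH] k //=; case: ifP => _ /=; rewrite IH. Qed.

Lemma ungrayK s : gray (size s) (ungray s) = s.
Proof.
elim: s => [|b s IH] //=; have := ungray_lt s; rewrite expnS.
case: b => H; last by rewrite H IH.
have -> : (2 * 2 ^ size s - 1 - ungray s < 2 ^ size s)%N = false by lia.
have -> : (2 * 2 ^ size s - 1 - (2 * 2 ^ size s - 1 - ungray s) = ungray s)%N
  by lia.
by rewrite IH.
Qed.

Lemma ungrayK_tuple N (t : N.-tuple bool) : gray N (ungray t) = t.
Proof. by rewrite -{1}(size_tuple t) ungrayK. Qed.

Lemma grayK n k : (k < 2 ^ n)%N -> ungray (gray n k) = k.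
Proof.
elim: n k => [|n IH] k /=; first by case: k.
rewrite expnS => Hk; case: ifP => H /=; first by rewrite IH.
rewrite size_gray IH; lia.
Qed.

Lemma eq_ungray s t : size s = size t -> (ungray s == ungray t) = (s == t).
Proof.
move=> Hst; apply/eqP/eqP => [E|-> //].
by rewrite -(ungrayK s) -(ungrayK t) Hst E.
Qed.

(* The parity of a bit string is the lowest bit of its Gray position. *)
Definition parity (s : seq bool) : bool := foldr addb false s.

Lemma parity_rcons s a : parity (rcons s a) = parity s (+) a.
Proof. by elim: s => [|b s IH] /=; rewrite ?addbF // IH addbA. Qed.

Lemma ungray_rcons s a : ungray (rcons s a) = (2 * ungray s + (parity s (+) a))%N.
Proof.
elim: s => [|b s IH] /=; first by case: a.
rewrite size_rcons IH; have := ungray_lt s; rewrite !expnS.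
case: b => /= H //; rewrite addNb; case: (parity s (+) a) => /=; lia.
Qed.

Lemma ungray_half p : ungray p = (2 * (ungray p %/ 2) + parity p)%N.
Proof.
suff <- : odd (ungray p) = parity p by rewrite {1}(divn_eq (ungray p) 2) modn2 mulnC.
elim/last_ind: p => [|p a _] //.
by rewrite ungray_rcons oddD oddM /= parity_rcons; case: (parity p (+) a).
Qed.

Lemma eqn_double_add (q q' : nat) (b b' : bool) :
  (2 * q + b == 2 * q' + b')%N = (q == q') && (b == b').
Proof. by case: b; case: b' => /=; rewrite ?andbT ?andbF; apply/eqP/eqP; lia. Qed.

(* The offset of the mode of a one-qubit (resp. two-qubit) value y inside
   its block of 4 (resp. 8) modes, given the parity pi of the context; these
   are the layouts of the blocks B_H, B_P (resp. B_C). *)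
Definition offset1 (pi : bool) (y : seq bool) : nat :=
  let a := nth false y 0 in
  if pi then (if a then 2 else 3) else (if a then 1 else 0).

Definition offset2 (pi : bool) (y : seq bool) : nat :=
  let a := nth false y 0 in let b := nth false y 1 in
  ((if pi then 4 else 0) + (if pi (+) a then 2 else 0) +
   (if pi (+) a (+) b then 1 else 0))%N.

Lemma offset1_lt pi y : (offset1 pi y < 4)%N.
Proof. by rewrite /offset1; case: pi; case: (nth false y 0). Qed.

Lemma offset2_lt pi y : (offset2 pi y < 8)%N.
Proof. by rewrite /offset2; case: pi; case: (nth false y 0); case: (nth false y 1). Qed.

Lemma ungray_offset1 p y : size y = 1%N ->
  ungray (p ++ y) = (4 * (ungray p %/ 2) + offset1 (parity p) y)%N.
Proof.
case: y => [|a []] //= _; rewrite cats1 ungray_rcons {1}ungray_half /offset1 /=.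
by case: (parity p); case: a => /=; lia.
Qed.

Lemma ungray_offset2 p y : size y = 2%N ->
  ungray (p ++ y) = (8 * (ungray p %/ 2) + offset2 (parity p) y)%N.
Proof.
case: y => [|a [|b []]] //= _.
have -> : p ++ [:: a; b] = rcons (rcons p a) b by rewrite -!cats1 -catA.
rewrite !ungray_rcons parity_rcons {1}ungray_half /offset2 /=.
by case: (parity p); case: a; case: b => /=; lia.
Qed.

Lemma split3 (T : Type) k n (t : seq T) :
  t = take k t ++ take n (drop k t) ++ drop (k + n) t.
Proof. by rewrite addnC -drop_drop !cat_take_drop. Qed.

Lemma eq_cat3 (T : eqType) (x y z x' y' z' : seq T) : size x = size x' -> size y = size y' ->
  (x ++ y ++ z == x' ++ y' ++ z') = [&& x == x', y == y' & z == z'].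
Proof. by move=> H1 H2; rewrite eqseq_cat // eqseq_cat. Qed.

Lemma eq_split3 (T : eqType) k n (t x y z : seq T) : (k + n <= size t)%N ->
  size x = k -> size y = n ->
  (t == x ++ y ++ z) =
  [&& take k t == x, take n (drop k t) == y & drop (k + n) t == z].
Proof.
move=> Ht Hx Hy; rewrite {1}(split3 k n t) eq_cat3 //;
  by rewrite size_takel ?size_drop; lia.
Qed.

Lemma sum_gray (V : nmodType) N (F : nat -> V) :
  \sum_(m < 2 ^ N) F m = \sum_(t : N.-tuple bool) F (ungray t).
Proof.
have ungray_ltN (t : N.-tuple bool) : (ungray t < 2 ^ N)%N.
  by rewrite -{2}(size_tuple t) ungray_lt.
have size_grayN (m : 'I_(2 ^ N)) : size (gray N m) == N by rewrite size_gray.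
rewrite (reindex (fun t => Ordinal (ungray_ltN t))) //=.
exists (fun m => Tuple (size_grayN m)) => t _; apply: val_inj => /=.
  by rewrite ungrayK_tuple.
by rewrite grayK.
Qed.

Section BitStringSums.
Variable V : pzSemiRingType.

Lemma natr_andb (a b : bool) : ((a && b)%:R : V) = a%:R * b%:R.
Proof. by case: a; case: b; rewrite /= ?mul1r ?mul0r. Qed.

Lemma sum_delta N (s : seq bool) (G : seq bool -> V) : size s = N ->
  \sum_(t : N.-tuple bool) (tval t == s)%:R * G t = G s.
Proof.
move=> Hs; have Hs' : size s == N by apply/eqP.
rewrite (bigD1 (Tuple Hs')) //= eqxx mul1r big1 ?addr0 // => t Ht.
by case: eqP => [E|]; [case/eqP: Ht; apply: val_inj | rewrite mul0r].
Qed.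

Lemma sum_middle k n l (x z : seq bool) (G : seq bool -> V) :
  size x = k -> size z = l ->
  \sum_(t : (k + n + l).-tuple bool)
     ((take k t == x) && (drop (k + n) t == z))%:R * G (take n (drop k t))
  = \sum_(y : n.-tuple bool) G y.
Proof.
move=> Hx Hz; symmetry.
transitivity (\sum_(y : n.-tuple bool) \sum_(t : (k + n + l).-tuple bool)
   (tval t == x ++ tval y ++ z)%:R * G (take n (drop k t))).
  apply: eq_bigr => y _; rewrite (sum_delta (fun s => G (take n (drop k s)))).
    by rewrite drop_size_cat // take_size_cat ?size_tuple.
  by rewrite !size_cat size_tuple Hx Hz addnA.
rewrite exchange_big; apply: eq_bigr => t _ /=.
have Hmid : size (take n (drop k t)) = n.
  by rewrite size_takel // size_drop size_tuple; lia.
have split_eq (y : n.-tuple bool) : (tval t == x ++ tval y ++ z) =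
    ((take k t == x) && (drop (k + n) t == z)) && (tval y == take n (drop k t)).
  rewrite (@eq_split3 _ k n) ?size_tuple //; last lia.
  by rewrite [take n _ == _]eq_sym; do 3 case: (_ == _).
under eq_bigr => y _ do rewrite split_eq natr_andb -mulrA.
by rewrite -mulr_sumr (sum_delta (fun _ => G (take n (drop k t)))).
Qed.

End BitStringSums.

Section Encoding.
Variable R : realType.
Local Notation C := R[i].

Lemma lsem_comp_gray N (A B : lcirc R) i j : lmodes B = (2 ^ N)%N ->
  lsem (Lcomp A B) i j =
  \sum_(t : N.-tuple bool) lsem A i (ungray t) * lsem B (ungray t) j.
Proof. by move=> HB /=; rewrite HB (sum_gray N (fun m => lsem A i m * lsem B m j)). Qed.

Lemma gray_conj_entry N (L : lcirc R) (u w : seq bool) :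
  size u = N -> size w = N ->
  \sum_(a < 2 ^ N) \sum_(b < 2 ^ N)
     graym R N u a * lsem L a b * graym_inv R N b w = lsem L (ungray u) (ungray w).
Proof.
move=> Hu Hw.
rewrite (sum_gray N (fun a => \sum_(b < 2 ^ N) graym R N u a * lsem L a b * graym_inv R N b w)).
rewrite -(sum_delta (fun s => lsem L (ungray s) (ungray w)) Hu).
apply: eq_bigr => t _.
rewrite (sum_gray N (fun b => graym R N u (ungray t) * lsem L (ungray t) b * graym_inv R N b w)).
rewrite -(sum_delta (fun s => (tval t == u)%:R * lsem L (ungray t) (ungray s)) Hw).
apply: eq_bigr => t' _.
rewrite /graym /graym_inv !ungrayK_tuple.
by rewrite [u == _]eq_sym mulrC mulrA.
Qed.

Lemma graym_mull n (x : seq bool) (F : nat -> C) : size x = n ->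
  \sum_(j < 2 ^ n) graym R n x j * F j = F (ungray x).
Proof.
move=> Hx; rewrite (sum_gray n (fun j => graym R n x j * F j)).
rewrite -(sum_delta (fun s => F (ungray s)) Hx).
by apply: eq_bigr => t _; rewrite /graym ungrayK_tuple eq_sym.
Qed.

Lemma graym_mulr n k (G : seq bool -> C) :
  \sum_(y : n.-tuple bool) G y * graym R n y k = G (gray n k).
Proof.
rewrite -(sum_delta G (size_gray n k)).
by apply: eq_bigr => t _; rewrite /graym mulrC.
Qed.

Lemma lmodes_ltpow (B : lcirc R) M : lmodes (ltpow B M) = (M * lmodes B)%N.
Proof. by elim: M => [|M IH] //=; rewrite IH mulSn. Qed.

Lemma lsem_ltpow (B : lcirc R) d M q q' r r' : lmodes B = d ->
  (q < M)%N -> (q' < M)%N -> (r < d)%N -> (r' < d)%N ->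
  lsem (ltpow B M) (d * q + r) (d * q' + r') = (q == q')%:R * lsem B r r'.
Proof.
move=> Hd; elim: M q q' => [|M IH] q q' // Hq Hq' Hr Hr' /=; rewrite Hd.
case: q Hq => [|q] Hq; case: q' Hq' => [|q'] Hq' /=.
- by rewrite !muln0 !add0n Hr Hr' mul1r.
- have -> : (d * q'.+1 + r' < d)%N = false by rewrite mulnS; lia.
  have -> : (d <= d * 0 + r)%N = false by rewrite muln0 add0n leqNgt Hr.
  by rewrite andbF mul0r.
- have -> : (d * q.+1 + r < d)%N = false by rewrite mulnS; lia.
  have -> : (d <= d * 0 + r')%N = false by rewrite muln0 add0n leqNgt Hr'.
  by rewrite andbF mul0r.
- have -> : (d * q.+1 + r < d)%N = false by rewrite mulnS; lia.
  have -> : (d <= d * q.+1 + r)%N = true by rewrite mulnS; lia.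
  have -> : (d <= d * q'.+1 + r')%N = true by rewrite mulnS; lia.
  have -> : (d * q.+1 + r - d = d * q + r)%N by rewrite mulnS; lia.
  have -> : (d * q'.+1 + r' - d = d * q' + r')%N by rewrite mulnS; lia.
  by rewrite IH // eqSS.
Qed.

Lemma lsem_ltpow1 (B : lcirc R) M i j : lmodes B = 1%N -> (i < M)%N -> (j < M)%N ->
  lsem (ltpow B M) i j = (i == j)%:R * lsem B 0 0.
Proof.
move=> H1 Hi Hj; have := @lsem_ltpow B 1 M i j 0 0 H1 Hi Hj isT isT.
by rewrite !mul1n !addn0.
Qed.

Variable sigma : nat -> nat -> nat -> lcirc R.
Hypothesis Hsigma : sigma_spec sigma.

Lemma sigma_modes k n l : lmodes (sigma k n l) = (2 ^ (k + n + l))%N.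
Proof. by case: (Hsigma k n l). Qed.

Lemma sigma_entry k n l (x y z u : seq bool) :
  size x = k -> size y = n -> size z = l -> size u = (k + n + l)%N ->
  lsem (sigma k n l) (ungray u) (ungray (x ++ y ++ z)) = (u == x ++ z ++ y)%:R.
Proof.
move=> Hx Hy Hz Hu.
case: (Hsigma k n l) => _ _ _ /(_ (Tuple (introT eqP Hx)) (Tuple (introT eqP Hy))
   (Tuple (introT eqP Hz)) (Tuple (introT eqP Hu))) /= <-.
by rewrite gray_conj_entry // !size_cat Hx Hy Hz addnA.
Qed.

Lemma sigma_entry_inv k n l (x y z t : seq bool) :
  size x = k -> size y = n -> size z = l -> size t = (k + n + l)%N ->
  lsem (sigma k n l) (ungray (x ++ z ++ y)) (ungray t) = (t == x ++ y ++ z)%:R.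
Proof.
move=> Hx Hy Hz Ht; have Hkn : (k + n <= size t)%N by lia.
have Hu : size (x ++ z ++ y) = (k + n + l)%N by rewrite !size_cat; lia.
have Sa : size (take k t) = k by rewrite size_takel //; lia.
have Sb : size (take n (drop k t)) = n by rewrite size_takel // size_drop; lia.
have Sc : size (drop (k + n) t) = l by rewrite size_drop; lia.
rewrite {1}(split3 k n t) sigma_entry // eq_cat3 ?Hx ?Sa ?Hz ?Sc //.
rewrite (@eq_split3 _ k n) //.
by rewrite (eq_sym x) (eq_sym z) (eq_sym y) [X in _ && X]andbC.
Qed.

Lemma sigma_conj_entry k n l (L : lcirc R) (x y z x' y' z' : seq bool) :
  size x = k -> size x' = k -> size y = n -> size y' = n -> size z = l -> size z' = l ->
  lsem (Lcomp (sigma k l n) (Lcomp L (sigma k n l)))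
       (ungray (x ++ y ++ z)) (ungray (x' ++ y' ++ z'))
  = lsem L (ungray (x ++ z ++ y)) (ungray (x' ++ z' ++ y')).
Proof.
move=> Hx Hx' Hy Hy' Hz Hz'.
have S1 : size (x ++ z ++ y) = (k + n + l)%N by rewrite !size_cat; lia.
have S2 : size (x' ++ z' ++ y') = (k + n + l)%N by rewrite !size_cat; lia.
have M : lmodes (Lcomp L (sigma k n l)) = (2 ^ (k + n + l))%N := sigma_modes k n l.
rewrite (lsem_comp_gray _ _ _ M).
transitivity (\sum_(t : (k + n + l).-tuple bool) (tval t == x ++ z ++ y)%:R *
  lsem (Lcomp L (sigma k n l)) (ungray t) (ungray (x' ++ y' ++ z'))).
  by apply: eq_bigr => t _; rewrite (@sigma_entry_inv k l n) ?size_tuple //; lia.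
rewrite (sum_delta (fun s => lsem (Lcomp L (sigma k n l)) (ungray s)
  (ungray (x' ++ y' ++ z'))) S1) (lsem_comp_gray _ _ _ (sigma_modes k n l)).
transitivity (\sum_(t : (k + n + l).-tuple bool) (tval t == x' ++ z' ++ y')%:R *
  lsem L (ungray (x ++ z ++ y)) (ungray t)).
  by apply: eq_bigr => t _; rewrite (@sigma_entry k n l) ?size_tuple // mulrC.
by rewrite (sum_delta (fun s => lsem L (ungray (x ++ z ++ y)) (ungray s)) S2).
Qed.

Definition enc_spec (c : qcirc R) (k l : nat) : Prop :=
  lmodes (enc sigma k l c) = (2 ^ (k + qwires c + l))%N /\
  forall x y z x' y' z' : seq bool, size x = k -> size x' = k ->
    size y = qwires c -> size y' = qwires c -> size z = l -> size z' = l ->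
    lsem (enc sigma k l c) (ungray (x ++ y ++ z)) (ungray (x' ++ y' ++ z'))
    = (x == x')%:R * (z == z')%:R * qsem c y y'.

Lemma enc_spec_diagonal c k l (B : lcirc R) M :
  enc sigma k l c = ltpow B M -> M = (2 ^ (k + qwires c + l))%N -> lmodes B = 1%N ->
  (forall y y', size y = qwires c -> size y' = qwires c ->
     qsem c y y' = (y == y')%:R * lsem B 0 0) ->
  enc_spec c k l.
Proof.
move=> Henc HM HB Hc; rewrite /enc_spec Henc HM; split=> [|x y z x' y' z' Hx Hx' Hy Hy' Hz Hz'].
  by rewrite lmodes_ltpow HB muln1.
have Hsz (a b d : seq bool) : size a = k -> size b = qwires c -> size d = l ->
  (ungray (a ++ b ++ d) < 2 ^ (k + qwires c + l))%N.
  by move=> Ha Hb Hd; have := ungray_lt (a ++ b ++ d); rewrite !size_cat Ha Hb Hd addnA.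
rewrite lsem_ltpow1 ?Hsz // eq_ungray ?eq_cat3 ?Hx ?Hy ?Hx' ?Hy' //; last first.
  by rewrite !size_cat; lia.
by rewrite Hc // !natr_andb; ring.
Qed.

Lemma enc_spec_empty k l : enc_spec QEmpty k l.
Proof.
apply: (@enc_spec_diagonal _ _ _ Lid (2 ^ (k + l))) => //=; first by rewrite addn0.
by case=> // [] [] //; rewrite mulr1.
Qed.

Lemma enc_spec_id k l : enc_spec QId k l.
Proof.
apply: (@enc_spec_diagonal _ _ _ Lid (2 ^ (k + l + 1))) => //=; first by rewrite addnAC.
by move=> y y' _ _; rewrite mulr1.
Qed.

Lemma enc_spec_scal phi k l : enc_spec (QScal phi) k l.
Proof.
apply: (@enc_spec_diagonal _ _ _ (Lph phi) (2 ^ (k + l))) => //=; first by rewrite addn0.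
by case=> // [] [] //; rewrite !mul1r.
Qed.

Lemma enc_spec_row c k l (x y z t : seq bool) : enc_spec c k l ->
  size x = k -> size y = qwires c -> size z = l -> size t = (k + qwires c + l)%N ->
  lsem (enc sigma k l c) (ungray (x ++ y ++ z)) (ungray t) =
  (x == take k t)%:R * (z == drop (k + qwires c) t)%:R *
  qsem c y (take (qwires c) (drop k t)).
Proof.
move=> [_ Hc] Hx Hy Hz Ht.
by rewrite [in ungray t](split3 k (qwires c) t) Hc // ?size_takel ?size_drop ?Ht; lia.
Qed.

Lemma enc_spec_col c k l (x y z t : seq bool) : enc_spec c k l ->
  size x = k -> size y = qwires c -> size z = l -> size t = (k + qwires c + l)%N ->
  lsem (enc sigma k l c) (ungray t) (ungray (x ++ y ++ z)) =
  (take k t == x)%:R * (drop (k + qwires c) t == z)%:R *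
  qsem c (take (qwires c) (drop k t)) y.
Proof.
move=> [_ Hc] Hx Hy Hz Ht.
by rewrite [in ungray t](split3 k (qwires c) t) Hc // ?size_takel ?size_drop ?Ht; lia.
Qed.

(* Sequential composition: the intermediate mode t must carry the context
   x, z, and the middle parts are summed as in the matrix product. *)
Lemma enc_spec_comp c2 c1 k l : qwires c2 = qwires c1 ->
  enc_spec c2 k l -> enc_spec c1 k l -> enc_spec (QComp c2 c1) k l.
Proof.
move=> Hw spec2 spec1; have [M1 _] := spec1.
split=> [|x y z x' y' z' Hx Hx' Hy Hy' Hz Hz']; first by rewrite /= M1.
rewrite [qwires _]/= in Hy Hy'; rewrite [enc _ _ _ _]/= (lsem_comp_gray _ _ _ M1).
set n := qwires c1 in Hy Hy' *.
pose G s := (x == x')%:R * (z == z')%:R * (qsem c2 y s * qsem c1 s y').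
transitivity (\sum_(t : (k + n + l).-tuple bool)
  ((take k t == x) && (drop (k + n) t == z))%:R * G (take n (drop k t))).
  apply: eq_bigr => t _; have Ht := size_tuple t.
  rewrite enc_spec_row ?enc_spec_col ?Hw // natr_andb /G.
  have [<-|_] := eqVneq (take k t) x; last by rewrite !mul0r.
  have [<-|_] := eqVneq (drop (k + n) t) z; last by rewrite !(mul0r, mulr0).
  by rewrite ?mulr1n; ring.
by rewrite sum_middle // -mulr_sumr.
Qed.

(* Parallel composition: c1 is encoded with c2's wires in its right context
   and c2 with c1's wires in its left context, so the only intermediate
   mode contributing is that of x y1 y2' z'. *)
Lemma enc_spec_tens c1 c2 k l :
  enc_spec c1 k (l + qwires c2) -> enc_spec c2 (k + qwires c1) l ->
  enc_spec (QTens c1 c2) k l.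
Proof.
move=> spec1 spec2; have [M1 IH1] := spec1; have [_ IH2] := spec2.
split=> [|x y z x' y' z' Hx Hx' Hy Hy' Hz Hz'].
  by rewrite /= M1; congr (2 ^ _)%N; lia.
rewrite [qwires _]/= in Hy Hy'.
rewrite [enc _ _ _ _]/= [qsem _ y y']/= (lsem_comp_gray _ _ _ M1).
set n1 := qwires c1 in Hy Hy' *; set n2 := qwires c2 in Hy Hy' *.
have Hy1 : size (take n1 y) = n1 by rewrite size_takel // Hy; lia.
have Hy1' : size (take n1 y') = n1 by rewrite size_takel // Hy'; lia.
have Hy2 : size (drop n1 y) = n2 by rewrite size_drop Hy; lia.
have Hy2' : size (drop n1 y') = n2 by rewrite size_drop Hy'; lia.
have -> : x ++ y ++ z = (x ++ take n1 y) ++ drop n1 y ++ z.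
  by rewrite -catA (catA (take n1 y)) cat_take_drop.
have -> : x' ++ y' ++ z' = x' ++ take n1 y' ++ (drop n1 y' ++ z').
  by rewrite (catA (take n1 y')) cat_take_drop.
set y1 := take n1 y in Hy1 *; set y2 := drop n1 y in Hy2 *.
set y1' := take n1 y' in Hy1' *; set y2' := drop n1 y' in Hy2' *.
set s0 := x ++ y1 ++ y2' ++ z'.
have Hs0 : size s0 = (k + n1 + (l + n2))%N by rewrite /s0 !size_cat; lia.
have Sxy : size (x ++ y1) = (k + n1)%N by rewrite size_cat Hx Hy1.
have Sz : size (y2' ++ z') = (l + n2)%N by rewrite size_cat; lia.
pose v := (x == x')%:R * (z == z')%:R * (qsem c1 y1 y1' * qsem c2 y2 y2') : C.
transitivity (\sum_(t : (k + n1 + (l + n2)).-tuple bool) (tval t == s0)%:R * v).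
  2: by rewrite (sum_delta (fun _ => v) Hs0).
apply: eq_bigr => t _; have Ht := size_tuple t.
have [->|Nt] := eqVneq (tval t) s0.
  rewrite {1}/s0 (catA x y1) IH2 // /s0 IH1 // !eqxx /v mulr1n; ring.
rewrite enc_spec_row ?enc_spec_col // ?Ht; try lia.
rewrite mul0r.
have [Ea|] := eqVneq (x ++ y1) (take (k + n1) t); last by rewrite !mul0r.
have [Eb|] := eqVneq (drop (k + n1) t) (y2' ++ z'); last by rewrite !(mul0r, mulr0).
by case/eqP: Nt; rewrite -(cat_take_drop (k + n1) t) -Ea Eb /s0 catA.
Qed.

(* SW is sigma_{k,l,2} o sigma_{k+l,1,1} o sigma_{k,2,l}: the pair of wires
   is moved to the back, its two bits are exchanged, and it is moved back. *)
Lemma enc_spec_swap k l : enc_spec QSW k l.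
Proof.
split=> [|x y z x' y' z' Hx Hx' Hy Hy' Hz Hz']; first by rewrite /= sigma_modes.
rewrite [qwires _]/= in Hy Hy'; rewrite [enc _ _ _ _]/= sigma_conj_entry //.
case: y' Hy' => [|a' [|b' []]] // _.
rewrite !catA (_ : [:: a'; b'] = [:: a'] ++ [:: b']) //.
rewrite (@sigma_entry (k + l) 1 1) ?size_cat ?Hx ?Hx' ?Hz ?Hz' //; last lia.
by rewrite -!catA eq_cat3 ?Hx ?Hx' ?Hz ?Hz' // !natr_andb mulrA.
Qed.

Definition block_code (B : lcirc R) d n (f : bool -> seq bool -> nat)
    (Q : seq bool -> seq bool -> C) : Prop :=
  [/\ lmodes B = d,
      forall p y, size y = n ->
        ungray (p ++ y) = (d * (ungray p %/ 2) + f (parity p) y)%N,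
      forall pi y, size y = n -> (f pi y < d)%N &
      forall pi pi' y y', size y = n -> size y' = n ->
        lsem B (f pi y) (f pi' y') = (pi == pi')%:R * Q y y'].

Lemma lsem_ltpow_blocks (B : lcirc R) d n m M (f : bool -> seq bool -> nat)
    (Q : seq bool -> seq bool -> C) :
  block_code B d n f Q -> (2 ^ m = 2 * M)%N ->
  forall p p' u u', size p = m -> size p' = m -> size u = n -> size u' = n ->
  lsem (ltpow B M) (ungray (p ++ u)) (ungray (p' ++ u')) = (p == p')%:R * Q u u'.
Proof.
move=> [HB Hpos Hf HQ] HM p p' u u' Hp Hp' Hu Hu'.
have Hq (s : seq bool) : size s = m -> (ungray s %/ 2 < M)%N.
  by move=> Hs; rewrite ltn_divLR // mulnC -HM -Hs ungray_lt.
rewrite !Hpos // lsem_ltpow ?Hq ?Hf // HQ // mulrA -natr_andb.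
congr (_ * _); rewrite -(@eq_ungray p p') ?Hp ?Hp' //.
by rewrite [in RHS](ungray_half p) [in RHS](ungray_half p') eqn_double_add.
Qed.

Lemma enc_spec_blocks (B : lcirc R) d n k l (f : bool -> seq bool -> nat)
    (Q : seq bool -> seq bool -> C) :
  ~~ ((k == 0) && (l == 0))%N -> block_code B d n f Q ->
  forall x y z x' y' z' : seq bool, size x = k -> size x' = k ->
    size y = n -> size y' = n -> size z = l -> size z' = l ->
  lsem (Lcomp (sigma k l n) (Lcomp (ltpow B (2 ^ (k + l - 1))) (sigma k n l)))
       (ungray (x ++ y ++ z)) (ungray (x' ++ y' ++ z'))
  = (x == x')%:R * (z == z')%:R * Q y y'.
Proof.
move=> Hkl HB x y z x' y' z' Hx Hx' Hy Hy' Hz Hz'.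
have HM : (2 ^ (k + l) = 2 * 2 ^ (k + l - 1))%N.
  by rewrite -expnS; congr (2 ^ _)%N; move: Hkl; rewrite negb_and => /orP[] /eqP; lia.
rewrite sigma_conj_entry // !catA (lsem_ltpow_blocks HB HM) ?size_cat //; try lia.
by rewrite eqseq_cat ?Hx ?Hx' // natr_andb.
Qed.

Lemma enc_spec_gate (g : qcirc R) n (E00 B : lcirc R) d (f : bool -> seq bool -> nat) :
  qwires g = n ->
  (forall k l, enc sigma k l g = if ((k == 0) && (l == 0))%N then E00 else
     Lcomp (sigma k l n) (Lcomp (ltpow B (2 ^ (k + l - 1))) (sigma k n l))) ->
  lmodes E00 = (2 ^ n)%N ->
  (forall y y', size y = n -> size y' = n -> lsem E00 (ungray y) (ungray y') = qsem g y y') ->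
  block_code B d n f (qsem g) ->
  forall k l, enc_spec g k l.
Proof.
move=> Hn Henc M00 H00 HB k l; rewrite /enc_spec Henc Hn.
case: ifP => [/andP[/eqP-> /eqP->]|Hkl]; split.
- by rewrite M00 addn0.
- move=> x y z x' y' z' /size0nil-> /size0nil-> Hy Hy' /size0nil-> /size0nil->.
  by rewrite !cats0 H00 // eqxx mulr1n !mul1r.
- exact: sigma_modes.
- exact: (enc_spec_blocks (negbT Hkl) HB).
Qed.

Lemma imagu_sqr : imagu R * imagu R = -1.
Proof. by rewrite /imagu; simpc. Qed.

Lemma cexpi_mpi2 : cexpi (mpi2 R) = - imagu R.
Proof. by rewrite /cexpi /mpi2 cosN sinN cos_pihalf sin_pihalf /imagu; simpc. Qed.

Lemma cos_pi4 : cos (pi4 R) = (Num.sqrt 2)^-1.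
Proof. by rewrite /pi4 -atan1 cos_atan expr1n. Qed.

Lemma sin_pi4 : sin (pi4 R) = (Num.sqrt 2)^-1.
Proof.
have := tan_piquarter R; rewrite /tan -/(pi4 R) cos_pi4 => H.
have H2 : (Num.sqrt (2:R))^-1 != 0.
  by rewrite invr_eq0; apply: lt0r_neq0; rewrite sqrtr_gt0 ltr0n.
by rewrite -(divfK H2 (sin (pi4 R))) H mul1r.
Qed.

(* The second half of B_H: the Hadamard gate with the two modes exchanged. *)
Definition Hrev : lcirc R :=
  Lcomp (Ltens (Lph (mpi2 R)) Lid) (Lcomp (Lbs (pi4 R)) (Ltens (Lph (mpi2 R)) Lid)).

Local Ltac solve_entry s := first [ ring
  | (transitivity (s * (imagu R * imagu R)); [ring | rewrite imagu_sqr; ring])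
  | (transitivity (- s * (imagu R * imagu R)); [ring | rewrite imagu_sqr; ring]) ].

Lemma EH00_entry i j : (i < 2)%N -> (j < 2)%N ->
  lsem (EH00 R) i j =
  ((Num.sqrt 2)^-1)%:C * (if (i == 1%N) && (j == 1%N) then -1 else 1).
Proof.
case: i => [|[|i]] // _; case: j => [|[|j]] // _;
rewrite /EH00 /= !big_ord_recr !big_ord0 /= ?cexpi_mpi2 ?cos_pi4 ?sin_pi4;
set s := ((Num.sqrt 2)^-1)%:C; solve_entry s.
Qed.

Lemma Hrev_entry i j : (i < 2)%N -> (j < 2)%N ->
  lsem Hrev i j =
  ((Num.sqrt 2)^-1)%:C * (if (i == 0%N) && (j == 0%N) then -1 else 1).
Proof.
case: i => [|[|i]] // _; case: j => [|[|j]] // _;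
rewrite /Hrev /= !big_ord_recr !big_ord0 /= ?cexpi_mpi2 ?cos_pi4 ?sin_pi4;
set s := ((Num.sqrt 2)^-1)%:C; solve_entry s.
Qed.

Lemma BH_code : block_code (BH R) 4 1 offset1 (qsem QH).
Proof.
split=> //; [exact: ungray_offset1 | by move=> *; apply: offset1_lt |].
move=> pi pi' [|a []] // [|b []] // _ _.
rewrite (_ : BH R = Ltens (EH00 R) Hrev) //; cbn [lsem].
rewrite (_ : lmodes (EH00 R) = 2%N) // /offset1.
move: (lsem (EH00 R)) EH00_entry (lsem Hrev) Hrev_entry => e He h Hh.
by case: pi; case: pi'; case: a; case: b; rewrite /= ?He ?Hh //= ?mul1r ?mul0r.
Qed.

Lemma BP_code (phi : R) : block_code (BP phi) 4 1 offset1 (qsem (QP phi)).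
Proof.
split=> //; [exact: ungray_offset1 | by move=> *; apply: offset1_lt |].
move=> pi pi' [|a []] // [|b []] // _ _.
by case: pi; case: pi'; case: a; case: b; rewrite /= ?mul1r ?mul0r ?mulr1.
Qed.

Lemma BC_code : block_code (BC R) 8 2 offset2 (qsem QCNOT).
Proof.
split=> //; [exact: ungray_offset2 | by move=> *; apply: offset2_lt |].
move=> pi pi' [|a [|b []]] // [|c [|d []]] // _ _.
by case: pi; case: pi'; case: a; case: b; case: c; case: d;
  rewrite /= ?mul1r ?mul0r ?mulr1.
Qed.

Lemma enc_spec_H k l : enc_spec QH k l.
Proof.
apply: (enc_spec_gate (E00 := EH00 R) _ _ _ _ BH_code) => //.
by move=> [|a []] // [|b []] // _ _; rewrite EH00_entry; case: a; case: b.
Qed.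

Lemma enc_spec_P phi k l : enc_spec (QP phi) k l.
Proof.
apply: (enc_spec_gate (E00 := Ltens Lid (Lph phi)) _ _ _ _ (BP_code phi)) => //.
by move=> [|a []] // [|b []] // _ _; case: a; case: b; rewrite /= ?mul1r ?mul0r ?mulr1.
Qed.

Lemma enc_spec_CNOT k l : enc_spec QCNOT k l.
Proof.
apply: (enc_spec_gate (E00 := Ltens Lid (Ltens Lid Lsw)) _ _ _ _ BC_code) => //.
move=> [|a [|b []]] // [|c [|d []]] // _ _.
by case: a; case: b; case: c; case: d; rewrite /= ?mul1r ?mul0r ?mulr1.
Qed.

Lemma enc_spec_all (c : qcirc R) : qwf c -> forall k l, enc_spec c k l.
Proof.
elim: c => [|phi||phi||||c2 IH2 c1 IH1|c1 IH1 c2 IH2] /= Hc k l.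
- exact: enc_spec_H.
- exact: enc_spec_P.
- exact: enc_spec_CNOT.
- exact: enc_spec_scal.
- exact: enc_spec_id.
- exact: enc_spec_swap.
- exact: enc_spec_empty.
- case/and3P: Hc => H2 H1 /eqP Hw.
  by apply: enc_spec_comp => //; [apply: IH2 | apply: IH1].
- case/andP: Hc => H1 H2.
  by apply: enc_spec_tens; [apply: IH1 | apply: IH2].
Qed.
End Encoding.

(* The main theorem is the invariant in the empty context, read at the Gray
   positions of x and of G_n(k). *)
Theorem mainTheorem5 (R : realType) (sigma : nat -> nat -> nat -> lcirc R)
    (Hsigma : sigma_spec sigma) (c : qcirc R) (Hc : qwf c)
    (x : (qwires c).-tuple bool) (k : nat) (Hk : (k < 2 ^ qwires c)%N) :
  \sum_(j < 2 ^ qwires c) graym R (qwires c) x j * lsem (E sigma c) j k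
  = \sum_(y : (qwires c).-tuple bool) qsem c x y * graym R (qwires c) y k.
Proof.
rewrite (graym_mull (fun j => lsem (E sigma c) j k) (size_tuple x)).
rewrite (graym_mulr _ k (qsem c x)).
have [_ encodes] := enc_spec_all Hsigma Hc 0 0.
have := encodes [::] x [::] [::] (gray (qwires c) k) [::] erefl erefl
  (size_tuple x) (size_gray _ _) erefl erefl.
by rewrite !cats0 grayK // eqxx mulr1n !mul1r.
Qed.
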